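(* Let $A$ be an algebra whose commutator is commutative and distributive w.r.t. arbitrary joins and such that $[\theta,\nabla_A]_A=\theta$ for all $\theta\in\mathrm{Con}(A)$. Then: (a) if $A$ is strongly Baer, then $A$ is semiprime; (b) if $A$ is Baer and has principal commutators, then $A$ is semiprime.
   Context: Let $A$ be an algebra of a fixed signature. $\mathrm{Con}(A)$ is the complete lattice of congruences of $A$, with bottom $\Delta_A$ and top $\nabla_A=A^2$; $\mathrm{PCon}(A)$ is the set of principal congruences of $A$. $[\cdot,\cdot]_A$ is the term condition commutator: for $\alpha,\beta,\mu\in\mathrm{Con}(A)$, $C(\alpha,\beta;\mu)$ means that for all $n,k$, every $(n+k)$-ary term $t$, all $(a_i,b_i)\in\alpha$ and $(c_j,d_j)\in\beta$: $(t(\bar a,\bar c),t(\bar a,\bar d))\in\mu$ iff $(t(\bar b,\bar c),t(\bar b,\bar d))\in\mu$; $[\alpha,\beta]_A=\bigcap\{\mu: C(\alpha,\beta;\mu)\}$; it satisfies $[\alpha,\beta]_A\subseteq\alpha\cap\beta$. ''The commutator of $A$ is commutative and distributive w.r.t. arbitrary joins'' means $[\alpha,\beta]_A=[\beta,\alpha]_A$ and $[\bigvee_{i}\alpha_i,\beta]_A=\bigvee_{i}[\alpha_i,\beta]_A$ for all families. Set $[\alpha,\beta]^1_A=[\alpha,\beta]_A$ and $[\alpha,\beta]^{n+1}_A=[[\alpha,\beta]^n_A,[\alpha,\beta]^n_A]_A$. A congruence $\phi\neq\nabla_A$ is prime if $[\alpha,\beta]_A\subseteq\phi$ implies $\alpha\subseteq\phi$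 or $\beta\subseteq\phi$; $\rho_A(\theta)$ is the intersection of all prime congruences containing $\theta$ ($\nabla_A$ if none); $A$ is semiprime if $\rho_A(\Delta_A)=\Delta_A$. For $\beta\in\mathrm{Con}(A)$, $\beta^\perp=\bigvee\{\alpha\in\mathrm{Con}(A):[\alpha,\beta]_A=\Delta_A\}$. $\mathcal B(\mathrm{Con}(A))$ is the set of complemented elements of the lattice $\mathrm{Con}(A)$. $A$ is strongly Baer iff $\theta^\perp\in\mathcal B(\mathrm{Con}(A))$ for all $\theta\in\mathrm{Con}(A)$, and Baer iff $\theta^\perp\in\mathcal B(\mathrm{Con}(A))$ for all $\theta\in\mathrm{PCon}(A)$. $A$ has principal commutators iff $[\alpha,\beta]_A\in\mathrm{PCon}(A)$ for all $\alpha,\beta\in\mathrm{PCon}(A)$. *)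

From mathcomp Require Import all_boot.
Set Implicit Arguments. Unset Strict Implicit. Unset Printing Implicit Defensive.

Record signature := Signature { sym : Type; arity : sym -> nat }.

Record algebra (S : signature) := Algebra {
  carrier :> Type;
  op : forall f : sym S, ('I_(arity f) -> carrier) -> carrier }.

Section UA.
Variable S : signature.
Variable A : algebra S.

Definition crel := A -> A -> Prop.

Definition incl (r s : crel) : Prop := forall x y, r x y -> s x y.
Definition req (r s : crel) : Prop := forall x y, r x y <-> s x y.

Definition Delta : crel := fun x y => x = y.
Definition Nabla : crel := fun _ _ => True.
Definition cmeet (r s : crel) : crel := fun x y => r x y /\ s x y.

Definition is_con (r : crel) : Prop :=
  (forall x, r x x) /\ (forall x y, r x y -> r y x) /\
  (forall x y z, r x y -> r y z -> r x z) /\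
  (forall (f : sym S) (a b : 'I_(arity f) -> A),
      (forall i, r (a i) (b i)) -> r (op a) (op b)).

Definition cjoin (I : Type) (fam : I -> crel) : crel :=
  fun x y => forall mu, is_con mu -> (forall i, incl (fam i) mu) -> mu x y.

Definition cjoin2 (r s : crel) : crel := cjoin (fun b : bool => if b then r else s).

Definition Cg (a b : A) : crel := cjoin (fun _ : unit => fun x y => x = a /\ y = b).
Definition is_pcon (r : crel) : Prop := exists a b, req r (Cg a b).

Inductive term (X : Type) : Type :=
| Var : X -> term X
| App : forall f : sym S, ('I_(arity f) -> term X) -> term X.

Fixpoint eval (X : Type) (env : X -> A) (t : term X) : A :=
  match t with
  | Var x => env x
  | App f ts => op (fun i => eval env (ts i))
  end.

Definition env2 (n k : nat) (a : 'I_n -> A) (c : 'I_k -> A) : 'I_n + 'I_k -> A :=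
  fun v => match v with inl i => a i | inr j => c j end.

Definition TC (alpha beta mu : crel) : Prop :=
  forall (n k : nat) (t : term ('I_n + 'I_k)) (a b : 'I_n -> A) (c d : 'I_k -> A),
    (forall i, alpha (a i) (b i)) -> (forall j, beta (c j) (d j)) ->
    (mu (eval (env2 a c) t) (eval (env2 a d) t) <->
     mu (eval (env2 b c) t) (eval (env2 b d) t)).

Definition comm (alpha beta : crel) : crel :=
  fun x y => forall mu, is_con mu -> TC alpha beta mu -> mu x y.

Definition comm_commutative : Prop :=
  forall alpha beta, is_con alpha -> is_con beta -> req (comm alpha beta) (comm beta alpha).

Definition comm_join_distributive : Prop :=
  forall (I : Type) (fam : I -> crel) (beta : crel),
    (forall i, is_con (fam i)) -> is_con beta ->
    req (comm (cjoin fam) beta) (cjoin (fun i => comm (fam i) beta)).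

Definition is_prime (phi : crel) : Prop :=
  is_con phi /\ ~ req phi Nabla /\
  forall alpha beta, is_con alpha -> is_con beta ->
    incl (comm alpha beta) phi -> incl alpha phi \/ incl beta phi.

Definition rho (theta : crel) : crel :=
  fun x y => forall phi, is_prime phi -> incl theta phi -> phi x y.

Definition semiprime : Prop := req (rho Delta) Delta.

Definition perp (beta : crel) : crel :=
  cjoin (fun s : {alpha : crel | is_con alpha /\ req (comm alpha beta) Delta} => proj1_sig s).

Definition complemented (alpha : crel) : Prop :=
  exists beta, is_con beta /\ req (cmeet alpha beta) Delta /\ req (cjoin2 alpha beta) Nabla.

Definition strongly_Baer : Prop :=
  forall theta, is_con theta -> complemented (perp theta).

Definition Baer : Prop :=
  forall theta, is_pcon theta -> complemented (perp theta).

Definition principal_commutators : Prop :=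
  forall alpha beta, is_pcon alpha -> is_pcon beta -> is_pcon (comm alpha beta).

End UA.

(* 1. If alpha is an abelian congruence ([alpha, alpha] = Delta) whose
      annihilator alpha^perp has a complement gamma, then alpha <= alpha^perp,
      so alpha <= [alpha, Nabla] = [alpha, alpha^perp \/ gamma]
             = [alpha, alpha^perp] \/ [alpha, gamma] <= Delta \/ (alpha^perp /\ gamma)
             = Delta.
   2. If no principal congruence Cg(a,b) with a <> b is abelian, then A is
      semiprime: starting from Cg(x,y), x <> y, choose pairs p_n with
      Cg(p_{n+1}) <= [Cg(p_n), Cg(p_n)]; by Zorn's lemma (unions of chains of
      congruences are congruences) some congruence is maximal among those
      containing no p_n, and such a congruence is prime; it does not contain
      (x,y), so (x,y) is not in rho(Delta).
   In a (strongly) Baer algebra the annihilator of every principal congruence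
   is complemented, so 1 and 2 give semiprimeness in both cases (a) and (b). *)

From mathcomp Require Import all_boot.
From mathcomp Require Import boolp classical_sets.

Section Congruences.
Context {S : signature} {A : algebra S}.
Implicit Types (r s al be mu : crel A).

Lemma con_refl {r} (x : A) : is_con r -> r x x.
Proof. by case=> refl _; exact: refl. Qed.

Lemma con_sym {r} {x y : A} : is_con r -> r x y -> r y x.
Proof. by case=> _ [sym _]; exact: sym. Qed.

Lemma con_trans {r} {x y z : A} : is_con r -> r x y -> r y z -> r x z.
Proof. by case=> _ [_ [trans _]]; exact: trans. Qed.

Lemma con_op {r} f (a b : 'I_(arity f) -> A) :
  is_con r -> (forall i, r (a i) (b i)) -> r (op a) (op b).
Proof. by case=> _ [_ [_ compat]]; exact: compat. Qed.

Lemma meet_con (P : crel A -> Prop) :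
  is_con (fun x y => forall mu, is_con mu -> P mu -> mu x y).
Proof.
split; [|split; [|split]].
- by move=> x mu mu_con _; exact: con_refl.
- by move=> x y xy mu mu_con Pmu; exact: con_sym mu_con (xy mu mu_con Pmu).
- move=> x y z xy yz mu mu_con Pmu.
  exact: con_trans mu_con (xy mu mu_con Pmu) (yz mu mu_con Pmu).
- by move=> f a b ab mu mu_con Pmu; apply: con_op => // i; exact: ab.
Qed.

Lemma cjoin_con I (fam : I -> crel A) : is_con (cjoin fam).
Proof. exact: meet_con. Qed.

Lemma comm_con al be : is_con (comm al be).
Proof. exact: meet_con. Qed.

Lemma cjoin_ub I (fam : I -> crel A) i : incl (fam i) (cjoin fam).
Proof. by move=> x y h mu _ fam_mu; exact: fam_mu i x y h. Qed.

Lemma cjoin2_ub_l r s : incl r (cjoin2 r s).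
Proof. exact: (cjoin_ub _ _ true). Qed.

Lemma cjoin2_ub_r r s : incl s (cjoin2 r s).
Proof. exact: (cjoin_ub _ _ false). Qed.

Lemma cjoin_least I (fam : I -> crel A) mu :
  is_con mu -> (forall i, incl (fam i) mu) -> incl (cjoin fam) mu.
Proof. by move=> mu_con fam_mu x y; apply. Qed.

Lemma Delta_con : is_con (@Delta S A).
Proof.
rewrite /Delta; split; [|split; [|split]] => //.
- by move=> x y z -> ->.
- by move=> f a b ab; congr op; exact: funext.
Qed.

Lemma Delta_least {r} : is_con r -> incl (@Delta S A) r.
Proof. by move=> r_con x y ->; exact: con_refl. Qed.

Lemma Cg_con (a b : A) : is_con (Cg a b).
Proof. exact: cjoin_con. Qed.

Lemma Cg_in (a b : A) : Cg a b a b.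
Proof. exact: (cjoin_ub _ _ tt a b (conj erefl erefl)). Qed.

Lemma Cg_least {a b : A} {mu} : is_con mu -> mu a b -> incl (Cg a b) mu.
Proof. by move=> mu_con ab; apply: cjoin_least => // _ x y [-> ->]. Qed.

Lemma eval_con r X (e1 e2 : X -> A) (t : term S X) :
  is_con r -> (forall v, r (e1 v) (e2 v)) -> r (eval e1 t) (eval e2 t).
Proof.
move=> r_con e12; elim: t => [v|f ts IH] /=; first exact: e12.
exact: con_op.
Qed.

Lemma comm_mono {al be al' be'} :
  incl al al' -> incl be be' -> incl (comm al be) (comm al' be').
Proof.
move=> alal' bebe' x y h mu mu_con TCmu; apply: h => // n k t a b c d ab cd.
by apply: TCmu => [i|j]; [exact: alal' | exact: bebe'].
Qed.

Lemma comm_le_l {al be} : is_con al -> incl (comm al be) al.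
Proof.
move=> al_con x y; apply=> // n k t a b c d ab _.
have rowc : al (eval (env2 a c) t) (eval (env2 b c) t).
  by apply: eval_con => // -[i|j] /=; [exact: ab | exact: con_refl].
have rowd : al (eval (env2 a d) t) (eval (env2 b d) t).
  by apply: eval_con => // -[i|j] /=; [exact: ab | exact: con_refl].
split=> h.
- exact: con_trans al_con (con_trans al_con (con_sym al_con rowc) h) rowd.
- exact: con_trans al_con (con_trans al_con rowc h) (con_sym al_con rowd).
Qed.

Lemma comm_le_r {al be} : is_con be -> incl (comm al be) be.
Proof.
move=> be_con x y; apply=> // n k t a b c d _ cd.
have cola : be (eval (env2 a c) t) (eval (env2 a d) t).
  by apply: eval_con => // -[i|j] /=; [exact: con_refl | exact: cd].
have colb : be (eval (env2 b c) t) (eval (env2 b d) t).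
  by apply: eval_con => // -[i|j] /=; [exact: con_refl | exact: cd].
by split.
Qed.

Section ChainUnion.
Variables (C : crel A -> Prop) (r0 : crel A).
Hypotheses (C_r0 : C r0) (C_con : forall r, C r -> is_con r)
  (C_chain : forall r s, C r -> C s -> incl r s \/ incl s r).

Definition chain_union : crel A := fun x y => exists2 r, C r & r x y.

Lemma chain_union_bound (I : eqType) (idx : seq I) (a b : I -> A) :
  (forall i, i \in idx -> chain_union (a i) (b i)) ->
  exists2 r, C r & forall i, i \in idx -> r (a i) (b i).
Proof.
elim: idx => [|j idx IH] ab; first by exists r0.
have [r Cr r_j] := ab j (mem_head j idx).
have [r' Cr' r'_idx] : exists2 r', C r' & forall i, i \in idx -> r' (a i) (b i).
  by apply: IH => i i_idx; apply: ab; rewrite in_cons i_idx orbT.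
have [rr'|r'r] := C_chain _ _ Cr Cr'.
- by exists r' => // i; rewrite in_cons => /predU1P[->|]; [exact: rr' | exact: r'_idx].
- by exists r => // i; rewrite in_cons => /predU1P[->|/r'_idx/r'r].
Qed.

Lemma chain_union_con : is_con chain_union.
Proof.
split; [|split; [|split]].
- by move=> x; exists r0 => //; exact/con_refl/C_con.
- by move=> x y [r Cr rxy]; exists r => //; exact: con_sym (C_con _ Cr) rxy.
- move=> x y z [r Cr rxy] [s Cs syz].
  have [rs|sr] := C_chain _ _ Cr Cs.
  + by exists s => //; exact: con_trans (C_con _ Cs) (rs _ _ rxy) syz.
  + by exists r => //; exact: con_trans (C_con _ Cr) rxy (sr _ _ syz).
- move=> f a b ab.
  have [r Cr rab] := @chain_union_bound _ (enum 'I_(arity f)) a b (fun i _ => ab i).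
  by exists r => //; apply: con_op (C_con _ Cr) _ => i; apply: rab; rewrite mem_enum.
Qed.

End ChainUnion.
End Congruences.

Section CommutatorTheory.
Context {S : signature} {A : algebra S}.
Implicit Types (r s al be ga mu phi : crel A).

Hypothesis comm_sym : comm_commutative A.
Hypothesis comm_distr : comm_join_distributive A.

Lemma comm_swap {al be} : is_con al -> is_con be -> incl (comm al be) (comm be al).
Proof. by move=> al_con be_con x y /(comm_sym al be al_con be_con x y). Qed.

Lemma comm_join_least I (fam : I -> crel A) be mu :
  (forall i, is_con (fam i)) -> is_con be -> is_con mu ->
  (forall i, incl (comm (fam i) be) mu) -> incl (comm (cjoin fam) be) mu.
Proof.
move=> fam_con be_con mu_con fam_mu x y /(comm_distr I fam be fam_con be_con x y).
exact: cjoin_least.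
Qed.

Lemma comm_join2_least_l r s be mu :
  is_con r -> is_con s -> is_con be -> is_con mu ->
  incl (comm r be) mu -> incl (comm s be) mu -> incl (comm (cjoin2 r s) be) mu.
Proof.
move=> r_con s_con be_con mu_con r_mu s_mu.
by apply: comm_join_least => // -[].
Qed.

Lemma comm_join2_least_r r s al mu :
  is_con r -> is_con s -> is_con al -> is_con mu ->
  incl (comm al r) mu -> incl (comm al s) mu -> incl (comm al (cjoin2 r s)) mu.
Proof.
move=> r_con s_con al_con mu_con r_mu s_mu x y.
move/(comm_swap al_con (cjoin_con _ _)).
apply: comm_join2_least_l => //.
- by move=> u v /(comm_swap r_con al_con); exact: r_mu.
- by move=> u v /(comm_swap s_con al_con); exact: s_mu.
Qed.

Lemma comm_join_phi {be ga phi} :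
  is_con be -> is_con ga -> is_con phi -> incl (comm be ga) phi ->
  incl (comm (cjoin2 be phi) (cjoin2 ga phi)) phi.
Proof.
move=> be_con ga_con phi_con bega.
have join_con : is_con (cjoin2 ga phi) by exact: cjoin_con.
apply: comm_join2_least_l => //; last exact: comm_le_l.
by apply: comm_join2_least_r => //; exact: comm_le_r.
Qed.

Lemma perp_greatest al be :
  is_con al -> req (comm al be) (@Delta S A) -> incl al (perp be).
Proof.
move=> al_con al_be.
pose ann := {al : crel A | is_con al /\ req (comm al be) (@Delta S A)}.
exact: (cjoin_ub _ (fun s : ann => proj1_sig s) (exist _ al (conj al_con al_be))).
Qed.

Lemma perp_annihilates {be} : is_con be -> incl (comm (perp be) be) (@Delta S A).
Proof.
move=> be_con; apply: comm_join_least => //.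
- by move=> s; exact: (proj1 (proj2_sig s)).
- exact: Delta_con.
- by move=> s x y /(proj2 (proj2_sig s) x y).
Qed.

Lemma abelian_trivial_of_complemented_perp al :
  (forall theta, is_con theta -> incl theta (comm theta (@Nabla S A))) ->
  is_con al -> complemented (perp al) -> req (comm al al) (@Delta S A) -> incl al (@Delta S A).
Proof.
move=> comm_Nabla al_con [ga [ga_con [perp_ga_meet perp_ga_join]]] al_ab.
have perp_con : is_con (perp al) by exact: cjoin_con.
have al_perp : incl al (perp al) by exact: perp_greatest.
have Nabla_join : incl (@Nabla S A) (cjoin2 (perp al) ga).
  by move=> u v _; apply/(perp_ga_join u v).
move=> x y /(comm_Nabla _ al_con x y)/(comm_mono (fun _ _ h => h) Nabla_join x y).
apply: comm_join2_least_r => //; first exact: Delta_con.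
- by move=> u v /(comm_swap al_con perp_con u v)/(perp_annihilates al_con u v).
- move=> u v uv; apply/(perp_ga_meet u v); split; last exact: (comm_le_r ga_con u v uv).
  exact: al_perp u v (comm_le_l al_con u v uv).
Qed.

Section PrimeAvoiding.
Variable p : nat -> A * A.
Hypothesis p_neq : forall n, (p n).1 <> (p n).2.
Hypothesis p_step : forall n,
  comm (Cg (p n).1 (p n).2) (Cg (p n).1 (p n).2) (p n.+1).1 (p n.+1).2.

Let gen n : crel A := Cg (p n).1 (p n).2.

Lemma gen_step {n} : incl (gen n.+1) (comm (gen n) (gen n)).
Proof. exact: Cg_least (comm_con _ _) (p_step n). Qed.

Lemma gen_antitone {m n} : m <= n -> incl (gen n) (gen m).
Proof.
elim: n => [|n IH]; first by rewrite leqn0 => /eqP ->.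
rewrite leq_eqVlt ltnS => /predU1P[-> //|mn] x y /gen_step.
by move/(comm_le_l (Cg_con _ _))/(IH mn).
Qed.

Definition avoids r := is_con r /\ forall n, ~ r (p n).1 (p n).2.

Definition maximal_avoiding phi :=
  avoids phi /\ forall r, avoids r -> incl phi r -> incl r phi.

(* Zorn's lemma: a chain of avoiding congruences, together with Delta, has
   an avoiding union. *)
Lemma exists_maximal_avoiding : exists phi, maximal_avoiding phi.
Proof.
have Delta_avoids : avoids (@Delta S A) by split; [exact: Delta_con | exact: p_neq].
pose T := {r : crel A | avoids r}.
pose R (s t : T) := `[< incl (sval s) (sval t) >].
have [||Ch Ch_tot|[phi phi_av] phi_max] :=
  @ZL_preorder T (exist _ (@Delta S A) Delta_avoids) R.
- by move=> t; apply/asboolP.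
- by move=> r s t /asboolP rs /asboolP st; apply/asboolP => x y /rs/st.
- pose C r := r = (@Delta S A) \/ exists2 s, Ch s & sval s = r.
  have C_con r : C r -> is_con r.
    by case=> [->|[s _ <-]]; [exact: Delta_con | exact: (proj1 (svalP s))].
  have C_chain r s : C r -> C s -> incl r s \/ incl s r.
    case=> [->|[r' Chr' <-]] Cs; first by left; exact: Delta_least (C_con s Cs).
    case: Cs => [->|[s' Chs' <-]]; first by right; exact: Delta_least (proj1 (svalP r')).
    by case: (Ch_tot r' s' Chr' Chs') => /asboolP; [left | right].
  have U_av : avoids (chain_union C).
    split; first exact: (@chain_union_con _ _ C (@Delta S A) (or_introl erefl)).
    by move=> n [r [->|[s _ <-]]]; [exact: p_neq | exact: (proj2 (svalP s) n)].
  exists (exist _ _ U_av) => s Chs; apply/asboolP => x y sxy.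
  by exists (sval s) => //; right; exists s.
- exists phi; split=> // r r_av phi_r.
  exact/asboolP/(phi_max (exist _ r r_av))/asboolP.
Qed.

Lemma join_reaches_gen {phi de} :
  maximal_avoiding phi -> is_con de -> ~ incl de phi ->
  exists n, incl (gen n) (cjoin2 de phi).
Proof.
move=> [phi_av phi_max] de_con de_phi; apply: contrapT => no_gen.
have join_av : avoids (cjoin2 de phi).
  split=> [|n pn]; first exact: cjoin_con.
  by apply: no_gen; exists n; exact: Cg_least (cjoin_con _ _) pn.
apply: de_phi => x y /(cjoin2_ub_l de phi x y).
exact: phi_max _ join_av (cjoin2_ub_r de phi) x y.
Qed.

(* If [be, ga] <= phi with be, ga not below phi, the joins with phi contain
   some gen n and gen m, so phi contains [gen k, gen k] >= gen k.+1 for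
   k = max n m: a contradiction. *)
Lemma maximal_avoiding_prime phi : maximal_avoiding phi -> is_prime phi.
Proof.
move=> phi_max; have [[phi_con phi_av] _] := phi_max.
split=> //; split=> [phi_full|be ga be_con ga_con bega].
  exact: (phi_av 0) (proj2 (phi_full _ _) I).
have [be_phi|be_phi] := EM (incl be phi); first by left.
have [ga_phi|ga_phi] := EM (incl ga phi); first by right.
have [n gen_be] := join_reaches_gen phi_max be_con be_phi.
have [m gen_ga] := join_reaches_gen phi_max ga_con ga_phi.
have gen_max_be : incl (gen (maxn n m)) (cjoin2 be phi).
  by move=> x y /(gen_antitone (leq_maxl n m) x y); exact: gen_be.
have gen_max_ga : incl (gen (maxn n m)) (cjoin2 ga phi).
  by move=> x y /(gen_antitone (leq_maxr n m) x y); exact: gen_ga.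
exfalso; apply: (phi_av (maxn n m).+1); apply: (comm_join_phi be_con ga_con phi_con bega).
exact: comm_mono gen_max_be gen_max_ga _ _ (gen_step _ _ (Cg_in _ _)).
Qed.

Lemma exists_prime_avoiding : exists2 phi, is_prime phi & ~ phi (p 0).1 (p 0).2.
Proof.
have [phi phi_max] := exists_maximal_avoiding.
by exists phi; [exact: maximal_avoiding_prime | exact: (proj2 (proj1 phi_max) 0)].
Qed.

End PrimeAvoiding.

Lemma nonabelian_principal_sequence (x y : A) :
  (forall a b : A, a <> b -> exists u v, u <> v /\ comm (Cg a b) (Cg a b) u v) ->
  x <> y ->
  exists p : nat -> A * A, [/\ p 0 = (x, y), forall n, (p n).1 <> (p n).2 &
    forall n, comm (Cg (p n).1 (p n).2) (Cg (p n).1 (p n).2) (p n.+1).1 (p n.+1).2].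
Proof.
move=> nonab xy.
have next_ex (q : A * A) : exists q' : A * A, q.1 <> q.2 ->
    q'.1 <> q'.2 /\ comm (Cg q.1 q.2) (Cg q.1 q.2) q'.1 q'.2.
  case: q => a b /=; have [-> | ab] := EM (a = b); first by exists (b, b).
  by have [u [v [uv h]]] := nonab a b ab; exists (u, v).
have [next nextP] := choice next_ex.
pose p n := iter n next (x, y).
have p_neq n : (p n).1 <> (p n).2 by elim: n => [|n IH] //; exact: (nextP _ IH).1.
by exists p; split=> // n; exact: (nextP _ (p_neq n)).2.
Qed.

Lemma semiprime_of_no_abelian_principal :
  (forall a b : A, req (comm (Cg a b) (Cg a b)) (@Delta S A) -> a = b) -> semiprime A.
Proof.
move=> abelian_trivial x y; split; last first.
  by rewrite /Delta => <- phi [phi_con _] _; exact: con_refl.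
move=> rho_xy; apply: contrapT => xy.
have nonab (a b : A) : a <> b -> exists u v, u <> v /\ comm (Cg a b) (Cg a b) u v.
  move=> ab; apply: contrapT => none; apply: ab; apply: abelian_trivial => u v.
  split=> [uv|->]; last exact: con_refl v (comm_con _ _).
  by apply: contrapT => neq_uv; apply: none; exists u, v.
have [p [p0 p_neq p_step]] := nonabelian_principal_sequence x y nonab xy.
have [phi phi_prime phi_p0] := exists_prime_avoiding p p_neq p_step.
by apply: phi_p0; rewrite p0; exact: rho_xy phi phi_prime (Delta_least (proj1 phi_prime)).
Qed.

Lemma semiprime_of_complemented_principal_perps :
  (forall theta, is_con theta -> incl theta (comm theta (@Nabla S A))) ->
  (forall a b : A, complemented (perp (Cg a b))) -> semiprime A.
Proof.
move=> comm_Nabla perp_compl; apply: semiprime_of_no_abelian_principal => a b ab.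
exact: abelian_trivial_of_complemented_perp _ comm_Nabla (Cg_con a b) (perp_compl a b) ab a b (Cg_in a b).
Qed.

End CommutatorTheory.

Theorem mainTheorem6 (S : signature) (A : algebra S) :
  comm_commutative A ->
  comm_join_distributive A ->
  (forall theta, is_con theta -> req (comm theta (@Nabla S A)) theta) ->
  (strongly_Baer A -> semiprime A) /\
  (Baer A -> principal_commutators A -> semiprime A).
Proof.
move=> comm_sym comm_distr comm_Nabla.
have Nabla_absorbs theta : is_con theta -> incl theta (comm theta (@Nabla S A)).
  by move=> theta_con x y /(comm_Nabla theta theta_con x y).
split=> [sBaer | Baer _]; apply: semiprime_of_complemented_principal_perps => // a b.
- exact/sBaer/Cg_con.
- by apply: Baer; exists a, b.
Qed.
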